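(* Let $\mathfrak k$ be a nonzero semisimple Hilbert–Lie algebra and $\phi$ an automorphism of $\mathfrak k$ of finite order. Then the fixed point algebra $\mathfrak k^\phi=\{x\in\mathfrak k:\phi(x)=x\}$ is nonzero.
   Context: A Hilbert–Lie algebra is a real Lie algebra with Hilbert space structure such that $\langle[x,y],z\rangle=\langle x,[y,z]\rangle$; it is semisimple if its center is trivial (equivalently it is an orthogonal sum of simple ideals). Automorphisms are isometric Lie algebra automorphisms. *)

From Stdlib Require Import Reals Lra.
Open Scope R_scope.

Record HilbertSpace := {
  hcar :> Type;
  hzero : hcar;
  hadd : hcar -> hcar -> hcar;
  hopp : hcar -> hcar;
  hscal : R -> hcar -> hcar;
  hinner : hcar -> hcar -> R;
  hadd_assoc : forall x y z, hadd x (hadd y z) = hadd (hadd x y) z;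
  hadd_comm : forall x y, hadd x y = hadd y x;
  hadd_0 : forall x, hadd hzero x = x;
  hadd_opp : forall x, hadd x (hopp x) = hzero;
  hscal_1 : forall x, hscal 1 x = x;
  hscal_assoc : forall a b x, hscal a (hscal b x) = hscal (a * b) x;
  hscal_addv : forall a x y, hscal a (hadd x y) = hadd (hscal a x) (hscal a y);
  hscal_adds : forall a b x, hscal (a + b) x = hadd (hscal a x) (hscal b x);
  hinner_sym : forall x y, hinner x y = hinner y x;
  hinner_addl : forall x y z, hinner (hadd x y) z = hinner x z + hinner y z;
  hinner_scall : forall a x y, hinner (hscal a x) y = a * hinner x y;
  hinner_pos : forall x, 0 <= hinner x x;
  hinner_def : forall x, hinner x x = 0 -> x = hzero;
  hcomplete : forall u : nat -> hcar,
    (forall eps, eps > 0 -> exists N, forall m n, (m >= N)%nat -> (n >= N)%nat ->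
        sqrt (hinner (hadd (u m) (hopp (u n))) (hadd (u m) (hopp (u n)))) < eps) ->
    exists l, forall eps, eps > 0 -> exists N, forall n, (n >= N)%nat ->
        sqrt (hinner (hadd (u n) (hopp l)) (hadd (u n) (hopp l))) < eps
}.

Arguments hzero {_}.
Arguments hadd {_} _ _.
Arguments hopp {_} _.
Arguments hscal {_} _ _.
Arguments hinner {_} _ _.

Record HilbertLie := {
  hl_space :> HilbertSpace;
  hl_br : hl_space -> hl_space -> hl_space;
  hl_br_addl : forall x y z, hl_br (hadd x y) z = hadd (hl_br x z) (hl_br y z);
  hl_br_scall : forall a x y, hl_br (hscal a x) y = hscal a (hl_br x y);
  hl_br_alt : forall x, hl_br x x = hzero;
  hl_jacobi : forall x y z,
    hadd (hl_br x (hl_br y z)) (hadd (hl_br y (hl_br z x)) (hl_br z (hl_br x y)))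
    = hzero;
  hl_invariant : forall x y z, hinner (hl_br x y) z = hinner x (hl_br y z)
}.

Arguments hl_br {_} _ _.

Definition hl_semisimple (k : HilbertLie) : Prop :=
  forall z : k, (forall x : k, hl_br z x = hzero) -> z = hzero.

Definition hl_nonzero (k : HilbertLie) : Prop := exists x : k, x <> hzero.

Definition hl_automorphism (k : HilbertLie) (phi : k -> k) : Prop :=
  (forall x y, phi (hadd x y) = hadd (phi x) (phi y)) /\
  (forall a x, phi (hscal a x) = hscal a (phi x)) /\
  (forall x y, phi (hl_br x y) = hl_br (phi x) (phi y)) /\
  (forall x y, hinner (phi x) (phi y) = hinner x y) /\
  (forall y, exists x, phi x = y) /\
  (forall x y, phi x = phi y -> x = y).

Definition finite_order {T : Type} (phi : T -> T) : Prop :=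
  exists n : nat, (n >= 1)%nat /\ forall x, Nat.iter n phi x = x.

(* Suppose phi has order n and no nonzero fixed point, and put theta = 2 pi/n.
   Work in the complexification, whose elements are pairs u = (re u, im u)
   standing for re u + i im u.  Call u an a-eigenvector (a : Z) if
   phi u = e^{i a theta} u.  Then
   - the bracket of an a- and a b-eigenvector is an (a+b)-eigenvector and the
     conjugate of an a-eigenvector is a (-a)-eigenvector;
   - 0-eigenvectors vanish, since they are fixed points;
   - by the invariance of the inner product, [conj u, [u, v]] = 0 forces
     [u, v] = 0.
   From these facts a Euclid-like induction on |a| + |b| shows that any
   a-eigenvector commutes with any b-eigenvector.  Finally every x is an
   average of real parts of eigenvectors (a discrete Fourier inversion, using
   that the n-th roots of unity sum to zero), so the algebra is abelian, and
   semisimplicity forces it to be zero: a contradiction. *)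

From Stdlib Require Import Reals Lra Lia ZArith Classical.
Open Scope R_scope.

Section HilbertLieAlgebra.
Context {k : HilbertLie}.
Implicit Types x y z t : k.

Lemma inner_zero_l y : hinner (@hzero k) y = 0.
Proof.
  pose proof (hinner_addl _ (@hzero k) hzero y) as H.
  rewrite hadd_0 in H. lra.
Qed.

Lemma inner_zero_r y : hinner y (@hzero k) = 0.
Proof. rewrite hinner_sym. apply inner_zero_l. Qed.

Lemma inner_addr x y z : hinner x (hadd y z) = hinner x y + hinner x z.
Proof. rewrite !(hinner_sym _ x). apply hinner_addl. Qed.

Lemma inner_scalr a x y : hinner x (hscal a y) = a * hinner x y.
Proof. rewrite !(hinner_sym _ x). apply hinner_scall. Qed.

Lemma inner_oppl x y : hinner (hopp x) y = - hinner x y.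
Proof.
  pose proof (hinner_addl _ x (hopp x) y) as H.
  rewrite hadd_opp, inner_zero_l in H. lra.
Qed.

Lemma inner_oppr x y : hinner x (hopp y) = - hinner x y.
Proof. rewrite !(hinner_sym _ x). apply inner_oppl. Qed.

Lemma inner_ext x y : (forall t, hinner x t = hinner y t) -> x = y.
Proof.
  intros H.
  assert (Hdiff : hadd x (hopp y) = hzero).
  { apply hinner_def. rewrite hinner_addl, inner_oppl, !H. lra. }
  transitivity (hadd (hadd x (hopp y)) y).
  - rewrite <- hadd_assoc, (hadd_comm _ (hopp y)), hadd_opp, hadd_comm, hadd_0.
    reflexivity.
  - rewrite Hdiff, hadd_0. reflexivity.
Qed.

Lemma inner_ext0 x : (forall t, hinner x t = 0) -> x = hzero.
Proof. intros H. apply inner_ext. intros t. rewrite H, inner_zero_l. reflexivity. Qed.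

Lemma opp_zero : hopp (@hzero k) = hzero.
Proof. apply inner_ext0. intros t. rewrite inner_oppl, inner_zero_l. lra. Qed.

Lemma opp_unique x y : hadd x y = hzero -> y = hopp x.
Proof.
  intros H. apply inner_ext. intros t.
  apply (f_equal (fun v => hinner v t)) in H.
  rewrite hinner_addl, inner_zero_l in H. rewrite inner_oppl. lra.
Qed.

Lemma br_oppl x y : hl_br (hopp x) y = hopp (hl_br x y).
Proof.
  apply inner_ext. intros t.
  rewrite hl_invariant, !inner_oppl, hl_invariant. reflexivity.
Qed.

Lemma br_addr x y z : hl_br x (hadd y z) = hadd (hl_br x y) (hl_br x z).
Proof.
  apply inner_ext. intros t.
  rewrite hinner_addl, !hl_invariant, hl_br_addl, inner_addr. reflexivity.
Qed.

Lemma br_anti x y : hl_br x y = hopp (hl_br y x).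
Proof.
  apply opp_unique.
  pose proof (hl_br_alt _ (hadd y x)) as H.
  rewrite hl_br_addl, !br_addr, !hl_br_alt, (hadd_0 k), (hadd_comm k _ hzero), (hadd_0 k) in H.
  exact H.
Qed.

Lemma br_scalr a x y : hl_br x (hscal a y) = hscal a (hl_br x y).
Proof.
  apply inner_ext. intros t.
  rewrite br_anti, hl_br_scall, (br_anti y x), inner_oppl, !hinner_scall, inner_oppl.
  lra.
Qed.

Lemma br_oppr x y : hl_br x (hopp y) = hopp (hl_br x y).
Proof. rewrite br_anti, br_oppl, <- br_anti. reflexivity. Qed.

Lemma br_zero_l x : hl_br (@hzero k) x = hzero.
Proof. apply inner_ext0. intros t. rewrite hl_invariant, inner_zero_l. reflexivity. Qed.

Lemma br_zero_r x : hl_br x (@hzero k) = hzero.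
Proof. rewrite br_anti, br_zero_l. apply opp_zero. Qed.

Lemma br_skew x y z : hinner (hl_br x y) z = - hinner y (hl_br x z).
Proof. rewrite br_anti, inner_oppl, hl_invariant. reflexivity. Qed.

Lemma jacobi_derivation x y w t :
  hinner (hl_br x (hl_br y w)) t
  = hinner (hl_br (hl_br x y) w) t + hinner (hl_br y (hl_br x w)) t.
Proof.
  pose proof (f_equal (fun v => hinner v t) (hl_jacobi _ x y w)) as H. simpl in H.
  rewrite !hinner_addl, inner_zero_l, (br_anti w x), br_oppr, inner_oppl,
    (br_anti w (hl_br x y)), inner_oppl in H.
  lra.
Qed.

End HilbertLieAlgebra.

#[local] Hint Rewrite @hinner_addl @inner_addr @inner_oppl @inner_oppr @hinner_scall
  @inner_scalr @hl_br_addl @br_addr @br_oppl @br_oppr @hl_br_scall @br_scalr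
  @inner_zero_l @inner_zero_r @br_zero_l @br_zero_r : lin.

Fixpoint rsum (f : nat -> R) (m : nat) : R :=
  match m with O => 0 | S m => rsum f m + f m end.

Lemma rsum_ext f g m : (forall j, (j < m)%nat -> f j = g j) -> rsum f m = rsum g m.
Proof. induction m; simpl; intros H; auto. rewrite IHm, H; auto. Qed.

Lemma rsum_plus f g m : rsum (fun j => f j + g j) m = rsum f m + rsum g m.
Proof. induction m; simpl; [ring | rewrite IHm; ring]. Qed.

Lemma rsum_scal c f m : rsum (fun j => c * f j) m = c * rsum f m.
Proof. induction m; simpl; [ring | rewrite IHm; ring]. Qed.

Lemma rsum_zero f m : (forall j, (j < m)%nat -> f j = 0) -> rsum f m = 0.
Proof.
  intros H. rewrite (rsum_ext f (fun _ => 0)) by auto.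
  clear H. induction m; simpl; lra.
Qed.

Lemma rsum_const m : rsum (fun _ => 1) m = INR m.
Proof. induction m; simpl; auto. rewrite IHm. destruct m; simpl; ring. Qed.

Lemma rsum_swap (F : nat -> nat -> R) m1 m2 :
  rsum (fun a => rsum (fun j => F a j) m2) m1 = rsum (fun j => rsum (fun a => F a j) m1) m2.
Proof.
  induction m1; simpl.
  - symmetry. apply rsum_zero. auto.
  - rewrite IHm1, <- rsum_plus. reflexivity.
Qed.

Lemma rsum_shift h m : h m = h O -> rsum (fun j => h (S j)) m = rsum h m.
Proof.
  intros Hper.
  assert (Hstep : rsum (fun j => h (S j)) m + h O = rsum h m + h m).
  { clear Hper. induction m; simpl; [ring | lra]. }
  lra.
Qed.

Lemma rsum_first g m :
  (0 < m)%nat -> (forall j, (0 < j < m)%nat -> g j = 0) -> rsum g m = g O.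
Proof.
  induction m as [|m IH]; intros Hm H; [lia|]. simpl.
  destruct m as [|m]; [simpl; ring|].
  rewrite IH by (lia || (intros; apply H; lia)). rewrite (H (S m)) by lia. ring.
Qed.

Fixpoint vsum {k : HilbertLie} (f : nat -> k) (m : nat) : k :=
  match m with O => hzero | S m => hadd (vsum f m) (f m) end.

Section VectorSums.
Context {k : HilbertLie}.

Lemma inner_vsum (f : nat -> k) m t :
  hinner (vsum f m) t = rsum (fun j => hinner (f j) t) m.
Proof.
  induction m; simpl; [apply inner_zero_l|]. rewrite hinner_addl, IHm. reflexivity.
Qed.

Lemma vsum_zero (f : nat -> k) m : (forall j, (j < m)%nat -> f j = hzero) -> vsum f m = hzero.
Proof.
  intros H. apply inner_ext0. intros t.
  rewrite inner_vsum. apply rsum_zero. intros j Hj. rewrite H by exact Hj.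
  apply inner_zero_l.
Qed.

Lemma br_vsum_l (f : nat -> k) m w :
  hl_br (vsum f m) w = vsum (fun j => hl_br (f j) w) m.
Proof. induction m; simpl; [apply br_zero_l|]. rewrite hl_br_addl, IHm. reflexivity. Qed.

Lemma br_vsum_r (f : nat -> k) m w :
  hl_br w (vsum f m) = vsum (fun j => hl_br w (f j)) m.
Proof. induction m; simpl; [apply br_zero_r|]. rewrite br_addr, IHm. reflexivity. Qed.

End VectorSums.

(* The complexification: u stands for re u + i im u. *)
Record cpair (k : HilbertLie) := CPair { re : k; im : k }.
Arguments CPair {k} _ _.
Arguments re {k} _.
Arguments im {k} _.

Section Complexification.
Context {k : HilbertLie}.
Implicit Types u v : cpair k.

Definition czero : cpair k := CPair hzero hzero.

Definition cconj u : cpair k := CPair (re u) (hopp (im u)).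

(* The complex-bilinear extension of the bracket. *)
Definition cbr u v : cpair k :=
  CPair (hadd (hl_br (re u) (re v)) (hopp (hl_br (im u) (im v))))
        (hadd (hl_br (re u) (im v)) (hl_br (im u) (re v))).

Lemma cpair_zero u : re u = hzero -> im u = hzero -> u = czero.
Proof. destruct u as [p q]; simpl. intros -> ->. reflexivity. Qed.

Lemma cbr_zero_sym u v : cbr u v = czero -> cbr v u = czero.
Proof.
  destruct u as [p1 q1], v as [p2 q2]. unfold cbr; simpl. intros H.
  injection H as Hre Him.
  apply cpair_zero; simpl; rewrite <- opp_zero; [rewrite <- Hre | rewrite <- Him];
    apply inner_ext; intros t;
    rewrite ?(br_anti p2 p1), ?(br_anti q2 q1), ?(br_anti p2 q1), ?(br_anti q2 p1);
    autorewrite with lin; ring.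
Qed.

Lemma br_re_zero u v :
  cbr u v = czero -> cbr u (cconj v) = czero -> hl_br (re u) (re v) = hzero.
Proof.
  destruct u as [p1 q1], v as [p2 q2]. unfold cbr, cconj; simpl. intros H1 H2.
  injection H1 as H1 _. injection H2 as H2 _.
  apply inner_ext0. intros t.
  apply (f_equal (fun w => hinner w t)) in H1, H2.
  autorewrite with lin in H1, H2. lra.
Qed.

Lemma br_re_im_zero u : im (cbr (cconj u) u) = hzero -> hl_br (re u) (im u) = hzero.
Proof.
  destruct u as [p q]. unfold cbr, cconj; simpl. intros H.
  apply inner_ext0. intros t.
  apply (f_equal (fun w => hinner w t)) in H.
  rewrite (br_anti (hopp q) p) in H. autorewrite with lin in H. lra.
Qed.

(* Invariance makes ad u adjoint to -ad (conj u) for the hermitian extension of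
   the inner product; hence [conj u, [u, v]] = 0 forces |[u, v]|^2 = 0. *)
Lemma cbr_zero_of_conj u v : cbr (cconj u) (cbr u v) = czero -> cbr u v = czero.
Proof.
  destruct u as [p q], v as [r s]. unfold cbr, cconj; simpl. intros H.
  injection H as H1 H2.
  set (e := hadd (hl_br p r) (hopp (hl_br q s))) in *.
  set (f := hadd (hl_br p s) (hl_br q r)) in *.
  assert (Hee : hinner e e = - hinner r (hl_br p e) + hinner s (hl_br q e)).
  { unfold e at 1. autorewrite with lin. rewrite !br_skew. ring. }
  assert (Hff : hinner f f = - hinner s (hl_br p f) - hinner r (hl_br q f)).
  { unfold f at 1. autorewrite with lin. rewrite !br_skew. ring. }
  apply (f_equal (hinner r)) in H1. apply (f_equal (hinner s)) in H2.
  autorewrite with lin in H1, H2.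
  pose proof (hinner_pos _ e). pose proof (hinner_pos _ f).
  apply cpair_zero; simpl; apply hinner_def; lra.
Qed.

Lemma cbr_conj_comm u v : hl_br (re u) (im u) = hzero ->
  cbr (cconj u) (cbr u v) = cbr u (cbr (cconj u) v).
Proof.
  destruct u as [p q], v as [r s]. unfold cbr, cconj; simpl. intros Hpq.
  f_equal; apply inner_ext; intros t; autorewrite with lin;
    pose proof (jacobi_derivation p q r t) as J1;
    pose proof (jacobi_derivation p q s t) as J2;
    rewrite Hpq, br_zero_l, inner_zero_l in J1, J2; lra.
Qed.

End Complexification.

Section Automorphism.
Context {k : HilbertLie} (phi : k -> k).
Hypothesis phi_aut : hl_automorphism k phi.

Lemma phi_add x y : phi (hadd x y) = hadd (phi x) (phi y).
Proof. apply (proj1 phi_aut). Qed.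

Lemma phi_scal a x : phi (hscal a x) = hscal a (phi x).
Proof. apply (proj1 (proj2 phi_aut)). Qed.

Lemma phi_br x y : phi (hl_br x y) = hl_br (phi x) (phi y).
Proof. apply (proj1 (proj2 (proj2 phi_aut))). Qed.

Lemma phi_zero : phi hzero = hzero.
Proof.
  apply hinner_def. destruct phi_aut as (_ & _ & _ & phi_inner & _).
  rewrite phi_inner. apply inner_zero_l.
Qed.

Lemma phi_opp x : phi (hopp x) = hopp (phi x).
Proof. apply opp_unique. rewrite <- phi_add, hadd_opp. apply phi_zero. Qed.

Lemma phi_vsum (f : nat -> k) m : phi (vsum f m) = vsum (fun j => phi (f j)) m.
Proof. induction m; simpl; [apply phi_zero|]. rewrite phi_add, IHm. reflexivity. Qed.

(* Eigenvectors of the complexified phi for the eigenvalue e^{i a theta}. *)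
Definition eigen (theta : R) (a : Z) (u : cpair k) : Prop :=
  phi (re u) = hadd (hscal (cos (IZR a * theta)) (re u))
                    (hopp (hscal (sin (IZR a * theta)) (im u))) /\
  phi (im u) = hadd (hscal (sin (IZR a * theta)) (re u))
                    (hscal (cos (IZR a * theta)) (im u)).

Lemma eigen_cbr theta a b u v :
  eigen theta a u -> eigen theta b v -> eigen theta (a + b) (cbr u v).
Proof.
  destruct u as [p1 q1], v as [p2 q2]. unfold eigen, cbr; simpl.
  intros [H1 H2] [H3 H4].
  rewrite plus_IZR, Rmult_plus_distr_r, cos_plus, sin_plus,
    !phi_add, !phi_opp, !phi_br, H1, H2, H3, H4.
  split; apply inner_ext; intros t; autorewrite with lin; ring.
Qed.

Lemma eigen_conj theta a u : eigen theta a u -> eigen theta (- a) (cconj u).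
Proof.
  destruct u as [p q]. unfold eigen, cconj; simpl. intros [H1 H2].
  rewrite opp_IZR, Ropp_mult_distr_l_reverse, cos_neg, sin_neg, phi_opp, H1, H2.
  split; apply inner_ext; intros t; autorewrite with lin; ring.
Qed.

Section NoFixedPoint.
Hypothesis no_fixed_point : forall x, phi x = x -> x = hzero.
Variable theta : R.

(* A 0-eigenvector consists of two fixed points. *)
Lemma eigen0_zero u : eigen theta 0 u -> u = czero.
Proof.
  destruct u as [p q]. unfold eigen; simpl. rewrite Rmult_0_l, cos_0, sin_0.
  intros [H1 H2]. apply cpair_zero; simpl; apply no_fixed_point;
    [rewrite H1 | rewrite H2]; apply inner_ext; intros t; autorewrite with lin; ring.
Qed.

Definition eigen_commute (a b : Z) : Prop :=
  forall u v, eigen theta a u -> eigen theta b v -> cbr u v = czero.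

Lemma eigen_commute_sym a b : eigen_commute a b -> eigen_commute b a.
Proof. intros H u v Hu Hv. apply cbr_zero_sym, H; assumption. Qed.

Lemma eigen_commute_0 a : eigen_commute a 0.
Proof.
  intros u v _ Hv. rewrite (eigen0_zero v Hv).
  unfold cbr, czero; simpl. rewrite !br_zero_r, opp_zero, hadd_0. reflexivity.
Qed.

(* For eigenvectors u, v of weights a, b, the vector [u, v] has weight a + b
   and conj u has weight -a, so the hypothesis gives [conj u, [u, v]] = 0. *)
Lemma eigen_commute_reflect a b : eigen_commute (- a) (a + b) -> eigen_commute a b.
Proof.
  intros H u v Hu Hv.
  apply cbr_zero_of_conj, H; [apply eigen_conj | apply eigen_cbr]; assumption.
Qed.

(* An a-eigenvector u satisfies [re u, im u] = 0, since [conj u, u] is a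
   0-eigenvector; then [u, [conj u, v]] = [conj u, [u, v]] lets us climb from
   c to c + a. *)
Lemma eigen_commute_add a c : eigen_commute a c -> eigen_commute a (c + a).
Proof.
  intros H u v Hu Hv.
  assert (Hpq : hl_br (re u) (im u) = hzero).
  { apply br_re_im_zero. rewrite (eigen0_zero (cbr (cconj u) u)); [reflexivity|].
    replace 0%Z with (- a + a)%Z by ring. apply eigen_cbr; [apply eigen_conj|]; assumption. }
  apply cbr_zero_of_conj. rewrite cbr_conj_comm by exact Hpq.
  apply H; [assumption|].
  replace c with (- a + (c + a))%Z by ring.
  apply eigen_cbr; [apply eigen_conj|]; assumption.
Qed.

Lemma eigen_commute_sub a c : eigen_commute a c -> eigen_commute a (c - a).
Proof.
  intros H. apply eigen_commute_reflect.
  replace (a + (c - a))%Z with ((c + a) + - a)%Z by ring.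
  apply eigen_commute_add, eigen_commute_reflect.
  replace (- - a)%Z with a by ring. replace (- a + (c + a))%Z with c by ring.
  exact H.
Qed.

(* Euclid's algorithm: replacing b by b - a or b + a (whichever decreases
   |a| + |b|) reduces every pair of weights to a pair containing 0. *)
Lemma eigen_commute_all : forall a b, eigen_commute a b.
Proof.
  enough (Hall : forall N a b, (Z.abs a + Z.abs b < Z.of_nat N)%Z -> eigen_commute a b).
  { intros a b. apply (Hall (S (Z.to_nat (Z.abs a + Z.abs b)))). lia. }
  induction N as [|N IH]; intros a b Hbound; [lia|].
  destruct (Z.eq_dec b 0) as [->|Hb]; [apply eigen_commute_0|].
  destruct (Z.eq_dec a 0) as [->|Ha]; [apply eigen_commute_sym, eigen_commute_0|].
  destruct (Z_le_gt_dec (Z.abs a) (Z.abs b)) as [Hab|Hab].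
  - destruct (Z_lt_le_dec 0 (a * b)) as [Hs|Hs].
    + replace b with ((b - a) + a)%Z by ring. apply eigen_commute_add, IH. nia.
    + replace b with ((b + a) - a)%Z by ring. apply eigen_commute_sub, IH. nia.
  - apply eigen_commute_sym.
    destruct (Z_lt_le_dec 0 (a * b)) as [Hs|Hs].
    + replace a with ((a - b) + b)%Z by ring. apply eigen_commute_add, IH. nia.
    + replace a with ((a + b) - b)%Z by ring. apply eigen_commute_sub, IH. nia.
Qed.

End NoFixedPoint.
End Automorphism.

Lemma cos_sum_telescope x m :
  2 * sin (x / 2) * rsum (fun a => cos (INR a * x)) m = sin (INR m * x - x / 2) + sin (x / 2).
Proof.
  induction m.
  - simpl. replace (0 * x - x / 2) with (- (x / 2)) by ring. rewrite sin_neg. ring.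
  - cbn [rsum]. rewrite Rmult_plus_distr_l, IHm, S_INR.
    replace ((INR m + 1) * x - x / 2) with (INR m * x + x / 2) by field.
    rewrite sin_plus, sin_minus. ring.
Qed.

Lemma cos_roots_sum n j : (0 < j < n)%nat ->
  rsum (fun a => cos (INR a * (2 * PI / INR n) * INR j)) n = 0.
Proof.
  intros Hj.
  assert (Hn : 0 < INR n) by (apply lt_0_INR; lia).
  assert (Hj0 : 0 < INR j) by (apply lt_0_INR; lia).
  assert (Hjn : INR j < INR n) by (apply lt_INR; lia).
  pose proof PI_RGT_0 as Hpi.
  set (x := 2 * PI / INR n * INR j).
  rewrite (rsum_ext _ (fun a => cos (INR a * x))) by (intros; unfold x; f_equal; ring).
  pose proof (cos_sum_telescope x n) as T.
  replace (INR n * x - x / 2) with (- (x / 2) + 2 * INR j * PI) in T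
    by (unfold x; field; lra).
  rewrite sin_period, sin_neg in T.
  assert (Hsin : 0 < sin (x / 2)).
  { apply sin_gt_0; unfold x.
    - apply Rmult_lt_0_compat; [|lra]. apply Rmult_lt_0_compat; [|lra].
      apply Rdiv_lt_0_compat; lra.
    - apply (Rmult_lt_reg_r (INR n)); [lra|]. field_simplify; [nra | lra]. }
  nra.
Qed.

Section Fourier.
Context {k : HilbertLie} (phi : k -> k) (n : nat).
Hypothesis phi_aut : hl_automorphism k phi.
Hypothesis n_pos : (1 <= n)%nat.
Hypothesis phi_order : forall x, Nat.iter n phi x = x.

Definition theta : R := 2 * PI / INR n.

Definition orbit_sum (c : nat -> R) (x : k) : k :=
  vsum (fun j => hscal (c j) (Nat.iter j phi x)) n.

Lemma inner_orbit_sum c x t :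
  hinner (orbit_sum c x) t = rsum (fun j => c j * hinner (Nat.iter j phi x) t) n.
Proof. unfold orbit_sum. rewrite inner_vsum. apply rsum_ext. intros. apply hinner_scall. Qed.

Lemma orbit_sum_lin alpha beta c1 c2 d x :
  (forall j, d j = alpha * c1 j + beta * c2 j) ->
  orbit_sum d x = hadd (hscal alpha (orbit_sum c1 x)) (hscal beta (orbit_sum c2 x)).
Proof.
  intros Hd. apply inner_ext. intros t.
  rewrite hinner_addl, !hinner_scall, !inner_orbit_sum, <- !rsum_scal, <- rsum_plus.
  apply rsum_ext. intros j _. rewrite Hd. ring.
Qed.

Lemma phi_orbit_sum c d x :
  (forall j, d (S j) = c j) -> d n = d O -> phi (orbit_sum c x) = orbit_sum d x.
Proof.
  intros Hshift Hper. apply inner_ext. intros t.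
  unfold orbit_sum at 1. rewrite (phi_vsum phi phi_aut), inner_vsum, inner_orbit_sum.
  set (h j := d j * hinner (Nat.iter j phi x) t).
  rewrite <- (rsum_shift h) by (unfold h; rewrite Hper, phi_order; reflexivity).
  apply rsum_ext. intros j _. unfold h.
  rewrite (phi_scal phi phi_aut), hinner_scall, Hshift. reflexivity.
Qed.

(* The a-th Fourier coefficient of x: sum_{j < n} e^{-i a theta j} phi^j x. *)
Definition fourier (a : nat) (x : k) : cpair k :=
  CPair (orbit_sum (fun j => cos (INR a * theta * INR j)) x)
        (orbit_sum (fun j => - sin (INR a * theta * INR j)) x).

Lemma eigen_fourier a x : eigen phi theta (Z.of_nat a) (fourier a x).
Proof.
  set (alpha := INR a * theta).
  assert (Hturn : alpha * INR n = 2 * INR a * PI).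
  { unfold alpha, theta. field. apply not_0_INR. lia. }
  unfold eigen, fourier; simpl. rewrite <- INR_IZR_INZ. fold alpha.
  split.
  - rewrite (phi_orbit_sum _ (fun j => cos (alpha * (INR j - 1)))).
    + rewrite (orbit_sum_lin (cos alpha) (- sin alpha)
                 (fun j => cos (alpha * INR j)) (fun j => - sin (alpha * INR j))).
      * apply inner_ext. intros t. autorewrite with lin. ring.
      * intros j. replace (alpha * (INR j - 1)) with (alpha * INR j - alpha) by ring.
        rewrite cos_minus. ring.
    + intros j. rewrite S_INR. f_equal. ring.
    + simpl. replace (alpha * (INR n - 1)) with (- alpha + 2 * INR a * PI)
        by (rewrite <- Hturn; ring).
      rewrite cos_period. f_equal. ring.
  - rewrite (phi_orbit_sum _ (fun j => - sin (alpha * (INR j - 1)))).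
    + rewrite (orbit_sum_lin (sin alpha) (cos alpha)
                 (fun j => cos (alpha * INR j)) (fun j => - sin (alpha * INR j))).
      * reflexivity.
      * intros j. replace (alpha * (INR j - 1)) with (alpha * INR j - alpha) by ring.
        rewrite sin_minus. ring.
    + intros j. rewrite S_INR. do 2 f_equal. ring.
    + simpl. replace (alpha * (INR n - 1)) with (- alpha + 2 * INR a * PI)
        by (rewrite <- Hturn; ring).
      rewrite sin_period. do 2 f_equal. ring.
Qed.

(* Fourier inversion: the real parts of the coefficients add up to n x, because
   the nontrivial n-th roots of unity sum to zero. *)
Lemma fourier_inversion x : vsum (fun a => re (fourier a x)) n = hscal (INR n) x.
Proof.
  apply inner_ext. intros t. rewrite inner_vsum, hinner_scall.
  rewrite (rsum_ext _ (fun a => rsum (fun j =>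
             cos (INR a * theta * INR j) * hinner (Nat.iter j phi x) t) n))
    by (intros; apply inner_orbit_sum).
  rewrite rsum_swap, rsum_first by (lia || (intros j Hj;
    rewrite (rsum_ext _ (fun a => hinner (Nat.iter j phi x) t * cos (INR a * theta * INR j)))
      by (intros; ring);
    rewrite rsum_scal; unfold theta; rewrite cos_roots_sum by lia; ring)).
  simpl. rewrite (rsum_ext _ (fun _ => hinner x t * 1))
    by (intros; rewrite Rmult_0_r, cos_0; ring).
  rewrite rsum_scal, rsum_const. ring.
Qed.

Section NoFixedPoint.
Hypothesis no_fixed_point : forall x, phi x = x -> x = hzero.

(* Without fixed points, the real parts of Fourier coefficients commute:
   fourier b y and its conjugate are eigenvectors, for b and -b. *)
Lemma br_fourier_re a b x y : hl_br (re (fourier a x)) (re (fourier b y)) = hzero.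
Proof.
  pose proof (eigen_fourier a x) as Ha. pose proof (eigen_fourier b y) as Hb.
  apply br_re_zero; eapply (eigen_commute_all phi phi_aut no_fixed_point theta _ _ _ _ Ha);
    [exact Hb | apply (eigen_conj phi phi_aut); exact Hb].
Qed.

Lemma br_trivial (x y : k) : hl_br x y = hzero.
Proof.
  assert (Hn : INR n <> 0) by (apply not_0_INR; lia).
  assert (H : hl_br (hscal (INR n) x) (hscal (INR n) y) = hzero).
  { rewrite <- !fourier_inversion, br_vsum_l. apply vsum_zero. intros a _.
    rewrite br_vsum_r. apply vsum_zero. intros b _. apply br_fourier_re. }
  apply inner_ext0. intros t.
  apply (f_equal (fun v => hinner v t)) in H. autorewrite with lin in H.
  destruct (Rmult_integral _ _ H) as [|H']; [contradiction|].
  destruct (Rmult_integral _ _ H'); [contradiction | assumption].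
Qed.

End NoFixedPoint.
End Fourier.

Theorem lemmaD1 (k : HilbertLie) (phi : k -> k) :
  hl_nonzero k -> hl_semisimple k ->
  hl_automorphism k phi -> finite_order phi ->
  exists x : k, x <> hzero /\ phi x = x.
Proof.
  intros [x0 Hx0] Hss Haut [n [Hn Hord]].
  apply NNPP. intros Hno.
  assert (no_fixed_point : forall x : k, phi x = x -> x = hzero).
  { intros x Hx. apply NNPP. intros Hne. apply Hno. exists x. auto. }
  apply Hx0, Hss. intros y.
  exact (br_trivial phi n Haut Hn Hord no_fixed_point x0 y).
Qed.
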